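(* Let $N\in\mathbb{N}$. Let $$\widehat{\mathcal{B}_1'}(N)=\{(q_1',q_2')\in\mathbb{Z}^2 \mid 2q_1'^2+2q_2'^2+q_2'=N\},$$ let $M'=\{(q_1',q_2')\in\mathbb{Z}^2\mid q_1'+q_2'\text{ even}\}$ and $L'=\mathbb{Z}^2$, let $\mathcal{U}(8N+1)=\{(x,y)\in\mathbb{Z}^2\mid x^2+y^2=8N+1\}$, and let $\varphi:\widehat{\mathcal{B}_1'}(N)\to \mathcal{U}(8N+1)$ be the (well-defined) map $\varphi(q_1',q_2')=(4q_1',\,4q_2'+1)$. Let the cyclic group $C_4=\langle r\rangle$ act on $\mathcal{U}(8N+1)$ by $r(x,y)=(-y,x)$. Then: (1) the action of $C_4$ on $\mathcal{U}(8N+1)$ is free; (2) the sets $\varphi(\widehat{\mathcal{B}_1'}(N)\cap M')$ and $\varphi(\widehat{\mathcal{B}_1'}(N)\cap (L'\setminus M'))$ are disjoint, and $\varphi(\widehat{\mathcal{B}_1'}(N))$ is a complete set of representatives of the $C_4$-orbits of $\mathcal{U}(8N+1)$.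
   Context: The expression $2q_1'^2+2q_2'^2+q_2'$ is the $\Lambda_1$-atomic length of the translation $t_q$ in the extended affine Weyl group of type $C_2^{(1)}$, for $q$ in the coweight lattice $L=\{\sqrt2 q_1\varepsilon_1+\sqrt2 q_2\varepsilon_2\mid q_1,q_2\in\frac12\mathbb{Z}\}$, rewritten in the coordinates $(q_1',q_2')=(q_1+q_2,q_1-q_2)$; $M'$ corresponds to the sublattice $M=\sqrt2\mathbb{Z}\varepsilon_1\oplus\sqrt2\mathbb{Z}\varepsilon_2$. *)

From mathcomp Require Import all_boot all_order all_algebra.
Set Implicit Arguments. Unset Strict Implicit. Unset Printing Implicit Defensive.
Import Order.TTheory GRing.Theory Num.Theory.
Local Open Scope ring_scope.

Definition Bhat (N : nat) (q : int * int) : Prop :=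
  2 * q.1 ^+ 2 + 2 * q.2 ^+ 2 + q.2 = N%:Z.

Definition Mp (q : int * int) : Prop := (2 %| q.1 + q.2)%Z.

Definition U (n : int) (p : int * int) : Prop := p.1 ^+ 2 + p.2 ^+ 2 = n.

Definition phi (q : int * int) : int * int := (4 * q.1, 4 * q.2 + 1).

(* generator r of C_4 : r(x,y) = (-y, x); the element r^k of C_4 = <r>,
   k : 'I_4, acts by iterating r k times. *)
Definition rot (p : int * int) : int * int := (- p.2, p.1).
Definition c4act (k : 'I_4) (p : int * int) : int * int := iter k rot p.

Definition phi_image (S : int * int -> Prop) (v : int * int) : Prop :=
  exists2 q, S q & phi q = v.

From Pilot Require Import Defs.
From mathcomp Require Import all_boot all_order all_algebra.
From mathcomp Require Import zify ring.
Set Implicit Arguments. Unset Strict Implicit. Unset Printing Implicit Defensive.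
Import Order.TTheory GRing.Theory Num.Theory.
Local Open Scope ring_scope.

(* Writing x = 4a + r gives x^2 = 8(2a^2 + ar) + r^2, so x^2 + y^2 = 1 (mod 8)
   forces one coordinate to be 0 and the other odd modulo 4.  Among the four
   rotations (x,y), (-y,x), (-x,-y), (y,-x) of such a point exactly one has
   coordinates (0, 1) modulo 4, and these points are exactly the image of the
   injective map phi, which sends q into U(8N+1) iff q lies on the conic
   Bhat N.  The action is free because only the origin is fixed by a
   nontrivial rotation. *)

Lemma c4act_fixed_point (k : 'I_4) (u : int * int) :
  c4act k u = u -> k = ord0 \/ u = (0, 0).
Proof.
case: u => x y; case: k => -[|[|[|[|//]]]] ?; first by left; apply: val_inj.
all: by rewrite /c4act /Defs.rot /= => -[? ?]; right; congr pair; lia.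
Qed.

Lemma U_rot (n : int) (p : int * int) : U n (Defs.rot p) = U n p.
Proof. by rewrite /U /= sqrrN addrC. Qed.

Lemma U_c4act (n : int) (k : 'I_4) (p : int * int) : U n (c4act k p) = U n p.
Proof. by rewrite /c4act; elim: (nat_of_ord k) => //= i IH; rewrite U_rot. Qed.

Lemma phi_inj : injective phi.
Proof. by move=> [a b] [c d]; rewrite /phi /= => -[? ?]; congr pair; lia. Qed.

Lemma U_phi (N : nat) (q : int * int) :
  U (8 * N%:Z + 1) (phi q) <-> Bhat N q.
Proof.
rewrite /U /Bhat /phi /=.
have -> : (4 * q.1) ^+ 2 + (4 * q.2 + 1) ^+ 2 =
          8 * (2 * q.1 ^+ 2 + 2 * q.2 ^+ 2 + q.2) + 1 by ring.
by move: (2 * _ + _ + _) => X; split; lia.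
Qed.

Definition phi_range (p : int * int) : Prop :=
  (p.1 %% 4)%Z = 0 /\ (p.2 %% 4)%Z = 1.

Lemma phi_rangeP (v : int * int) : phi_range v <-> exists q, phi q = v.
Proof.
split=> [|[q <-]]; last by rewrite /phi_range /phi /=; lia.
case: v => x y [/= x0 y1]; exists (x %/ 4, y %/ 4)%Z.
by rewrite /phi /=; congr pair; lia.
Qed.

Lemma phi_image_Bhat (N : nat) (v : int * int) :
  phi_image (Bhat N) v <-> U (8 * N%:Z + 1) v /\ phi_range v.
Proof.
split=> [[q Bq <-] | [Uv /phi_rangeP [q Eq]]].
  by split; [apply/U_phi | apply/phi_rangeP; exists q].
by exists q => //; apply/U_phi; rewrite Eq.
Qed.

Lemma sqr_mod8 (x : int) : exists m, x ^+ 2 = 8 * m + (x %% 4)%Z ^+ 2.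
Proof.
exists (2 * (x %/ 4)%Z ^+ 2 + (x %/ 4)%Z * (x %% 4)%Z).
by rewrite {1}(divz_eq x 4); ring.
Qed.

Lemma sum_sqr_1mod8_mod4 (m x y : int) : x ^+ 2 + y ^+ 2 = 8 * m + 1 ->
  (x %% 4)%Z = 0 /\ ((y %% 4)%Z = 1 \/ (y %% 4)%Z = 3) \/
  (y %% 4)%Z = 0 /\ ((x %% 4)%Z = 1 \/ (x %% 4)%Z = 3).
Proof.
have [a ->] := sqr_mod8 x; have [b ->] := sqr_mod8 y.
have : (x %% 4 = 0 \/ x %% 4 = 1 \/ x %% 4 = 2 \/ x %% 4 = 3)%Z by lia.
have : (y %% 4 = 0 \/ y %% 4 = 1 \/ y %% 4 = 2 \/ y %% 4 = 3)%Z by lia.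
by case=> [->|[->|[->|->]]]; case=> [->|[->|[->|->]]]; lia.
Qed.

Lemma exists_c4act_phi_range (m : int) (u : int * int) :
  U (8 * m + 1) u -> exists k : 'I_4, phi_range (c4act k u).
Proof.
case: u => x y; rewrite /U /= => /sum_sqr_1mod8_mod4 [[x0 [y1|y3]] | [y0 [x1|x3]]].
- by exists ord0.
- by exists (@Ordinal 4 2 isT); rewrite /phi_range /c4act /Defs.rot /=; lia.
- by exists (@Ordinal 4 1 isT); rewrite /phi_range /c4act /Defs.rot /=; lia.
- by exists (@Ordinal 4 3 isT); rewrite /phi_range /c4act /Defs.rot /=; lia.
Qed.

Lemma c4act_phi_range_uniq (k k' : 'I_4) (u : int * int) :
  phi_range (c4act k u) -> phi_range (c4act k' u) -> k = k'.
Proof.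
case: u => x y; case: k => -[|[|[|[|//]]]] ?; case: k' => -[|[|[|[|//]]]] ?.
all: rewrite /phi_range /c4act /Defs.rot /= => ? ?.
all: first [by apply: val_inj | exfalso; lia].
Qed.

Theorem theorem8p12 (N : nat) :
  let n := (8 * N + 1)%:Z in
  (* (1) the C_4 action on U(8N+1) is free *)
  (forall u, U n u -> forall k : 'I_4, c4act k u = u -> k = ord0)
  /\
  (* (2a) the two image sets are disjoint *)
  (forall v, ~ (phi_image (fun q => Bhat N q /\ Mp q) v /\
                phi_image (fun q => Bhat N q /\ ~ Mp q) v))
  /\
  (* phi is well defined: phi(Bhat N) is contained in U(8N+1) *)
  (forall q, Bhat N q -> U n (phi q))
  /\
  (* (2b) every C_4-orbit of U(8N+1) meets phi(Bhat N) in exactly one point *)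
  (forall u, U n u ->
     exists! v, phi_image (Bhat N) v /\ exists k : 'I_4, c4act k u = v).
Proof.
move=> n; have -> : n = 8 * N%:Z + 1 by rewrite /n; lia.
split; [|split; [|split]].
- move=> u Uu k /c4act_fixed_point [//|u0].
  by move: Uu; rewrite u0 /U /=; lia.
- move=> v [[q [_ Mq] <-] [q' [_ nMq'] /phi_inj q'q]].
  by apply: nMq'; rewrite q'q.
- by move=> q /U_phi.
- move=> u Uu; have [k Rk] := exists_c4act_phi_range Uu.
  exists (c4act k u); split.
    by split; [apply/phi_image_Bhat; rewrite U_c4act | exists k].
  move=> v [/phi_image_Bhat [_ Rv] [k' Ev]]; subst v.
  by rewrite (c4act_phi_range_uniq Rk Rv).
Qed.
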